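(* Let $d\ge 1$, $\eta>0$, $g\in\mathbb{R}^d$ and $p\in\mathbb{R}^d$ with $\eta p\in[-1,0]^d$. Define $\psi:\operatorname{dom}\psi\to\mathbb{R}$ by $$\psi(\lambda)=\lambda-\sum_{i=1}^d (1-\eta p(i))\log(\lambda+\eta g(i)),\qquad \operatorname{dom}\psi=\{\lambda\in\mathbb{R}:\lambda+\eta g(i)>0\ \forall i\in[d]\}.$$ Then $\psi$ has a unique minimizer $\lambda^\star\in\operatorname{dom}\psi$. Moreover, defining $x\in\mathbb{R}^d$ and $\hat g\in\mathbb{R}^d$ by $$x(i)=\frac{1-\eta p(i)}{\lambda^\star+\eta g(i)},\qquad \hat g(i)=p(i)\cdot\frac{\lambda^\star+\eta g(i)}{1-\eta p(i)},\qquad i\in[d],$$ we have $x\in\Delta$, $x\odot\hat g=p$, and $$x\in\operatorname*{argmin}_{y\in\Delta}\ \langle g,y\rangle+\langle\hat g,y\rangle+\eta^{-1}h(y).$$ In other words, the pair $(x,\hat g)$ solves the system of equations $x\odot \hat g = p$, $x\in\operatorname{argmin}_{y\in\Delta}\langle g+\hat g,y\rangle+\eta^{-1}h(y)$.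
   Context: $\Delta=\{x\in\mathbb{R}^d: x(i)\ge 0\ \forall i,\ \sum_{i=1}^d x(i)=1\}$ is the probability simplex. $h$ is the log-barrier $h(x)=-d\log d-\sum_{i=1}^d\log x(i)$ (equal to $+\infty$ if some $x(i)=0$). $\odot$ denotes the entrywise product of vectors. $[d]=\{1,\dots,d\}$. *)

From HB Require Import structures.
From mathcomp Require Import all_boot all_order all_algebra.
From mathcomp Require Import all_classical all_reals all_analysis.
Set Implicit Arguments. Unset Strict Implicit. Unset Printing Implicit Defensive.
Import Order.TTheory GRing.Theory Num.Theory.
Local Open Scope ring_scope.

Definition simplex (R : realType) (d : nat) (x : 'I_d -> R) : Prop :=
  (forall i, 0 <= x i) /\ \sum_(i < d) x i = 1.

Definition dotv (R : realType) (d : nat) (u v : 'I_d -> R) : R :=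
  \sum_(i < d) u i * v i.

Definition logbarrier (R : realType) (d : nat) (x : 'I_d -> R) : \bar R :=
  if `[< forall i, 0 < x i >] then
    ((- (d%:R * ln (d%:R : R)) - \sum_(i < d) ln (x i))%:E)%E
  else +oo%E.

Definition regobj (R : realType) (d : nat) (eta : R) (c y : 'I_d -> R) : \bar R :=
  ((dotv c y)%:E + (eta^-1)%:E * logbarrier y)%E.

Definition psi_dom (R : realType) (d : nat) (eta : R) (g : 'I_d -> R) (lam : R) : Prop :=
  forall i, 0 < lam + eta * g i.

Definition psi (R : realType) (d : nat) (eta : R) (g p : 'I_d -> R) (lam : R) : R :=
  lam - \sum_(i < d) (1 - eta * p i) * ln (lam + eta * g i).

Definition is_psi_minimizer (R : realType) (d : nat) (eta : R) (g p : 'I_d -> R)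
  (lam : R) : Prop :=
  psi_dom eta g lam /\ forall mu, psi_dom eta g mu -> psi eta g p lam <= psi eta g p mu.

From HB Require Import structures.
From mathcomp Require Import all_boot all_order all_algebra.
From mathcomp Require Import all_classical all_reals all_analysis.
From mathcomp Require Import ring lra.
Set Implicit Arguments. Unset Strict Implicit. Unset Printing Implicit Defensive.
Import Order.TTheory GRing.Theory Num.Theory numFieldNormedType.Exports.
Local Open Scope ring_scope.

(* Write a i = 1 - eta p(i) (which is >= 1 > 0) and c i = eta g(i),
   so that psi(mu) = mu - sum_i a i ln(mu + c i).  Its derivative vanishes exactly
   where the "resolvent sum" S(lam) = sum_i a i / (lam + c i) equals 1.
   1. S is continuous on the domain, at least 1 near its left end and at most 1 far
      to the right; the intermediate value theorem yields lam with S(lam) = 1.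
   2. The tangent-line inequality ln u - ln v <= u/v - 1 (strict for u <> v), summed
      with weights a i, shows that such a lam is the strict global minimizer of psi;
      this gives existence and uniqueness at once.
   3. x i = a i / (lam + c i) lies in the open simplex since S(lam) = 1, and
      x i * (eta (g i + ghat i) + lam) = 1.  This is the stationarity condition of the
      log-barrier problem on the simplex, and the same tangent-line inequality shows
      that any such x minimizes <c', y> + eta^-1 h(y) over the simplex. *)

Lemma ln_sub_le (R : realType) (u v : R) : 0 < u -> 0 < v -> ln u - ln v <= u / v - 1.
Proof.
move=> hu hv; rewrite -ln_div ?posrE //.
have := expR_ge1Dx (ln (u / v)); rewrite lnK ?posrE ?divr_gt0 //; lra.
Qed.

Lemma ln_sub_lt (R : realType) (u v : R) : 0 < u -> 0 < v -> u != v ->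
  ln u - ln v < u / v - 1.
Proof.
move=> hu hv huv; have huv_pos : 0 < u / v by rewrite divr_gt0.
rewrite -ln_div ?posrE //.
have ln_neq0 : ln (u / v) != 0.
  rewrite ln_eq0 //; apply: contra huv => /eqP uv1.
  by rewrite -(divfK (lt0r_neq0 hv) u) uv1 mul1r.
have := expR_gt1Dx ln_neq0; rewrite lnK ?posrE //; lra.
Qed.

Section ResolventEquation.
Variables (R : realType) (d : nat) (a c : 'I_d -> R).
Hypothesis a_gt0 : forall i, 0 < a i.

Definition weighted_log_dual (mu : R) : R := mu - \sum_(i < d) a i * ln (mu + c i).

Definition resolvent_sum (lam : R) : R := \sum_(i < d) a i / (lam + c i).

Lemma resolvent_sum_continuous (lam : R) :
  (forall i, 0 < lam + c i) -> {for lam, continuous resolvent_sum}.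
Proof.
move=> lam_dom; apply: cvg_big => // [|i _]; first exact: add_continuous.
suff term_cont : {for lam, continuous (fun t => a i / (t + c i))} by exact: term_cont.
apply: continuousM; first exact: cst_continuous.
apply: continuousV; first by rewrite gt_eqF.
by apply: continuousD; [exact: cvg_id | exact: cst_continuous].
Qed.

(* For d >= 1 the equation S(lam) = 1 has a solution in the domain: with c j minimal,
   S(a j - c j) >= 1 and S(sum a - c j) <= 1, so the IVT applies. *)
Lemma resolvent_sum_root : (1 <= d)%N ->
  exists2 lam, (forall i, 0 < lam + c i) & resolvent_sum lam = 1.
Proof.
move=> hd; case: (@arg_minP _ _ _ (Ordinal hd) xpredT c isT) => j _ c_min.
pose A := \sum_(i < d) a i.
have aj_le_A : a j <= A.
  rewrite /A (bigD1 j) //= lerDl; apply: sumr_ge0 => i _; exact: ltW.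
pose lo := a j - c j; pose hi := A - c j.
have shift_pos t i : lo <= t -> a j <= t + c i.
  by move=> lo_t; have := c_min i isT; rewrite /lo in lo_t; lra.
have lo_hi : lo <= hi by rewrite /lo /hi; lra.
have S_lo : 1 <= resolvent_sum lo.
  rewrite /resolvent_sum (bigD1 j) //= {2}/lo subrK divff ?gt_eqF // lerDl.
  apply: sumr_ge0 => i _; apply: divr_ge0; first exact: ltW.
  by have := a_gt0 j; have := shift_pos lo i (lexx _); rewrite /lo; lra.
have S_hi : resolvent_sum hi <= 1.
  have A_pos : 0 < A by have := a_gt0 j; lra.
  rewrite -(divff (lt0r_neq0 A_pos)) /resolvent_sum /A mulr_suml.
  apply: ler_sum => i _; apply: ler_pM; [exact: ltW | | exact: lexx |].
    by rewrite invr_ge0; have := a_gt0 j; have := shift_pos hi i lo_hi; lra.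
  rewrite lef_pV2 ?posrE //; first by have := c_min i isT; rewrite /hi /A; lra.
  by have := a_gt0 j; have := shift_pos hi i lo_hi; lra.
have S_cont : {within `[lo, hi], continuous resolvent_sum}%classic.
  apply: continuous_in_subspaceT => t; rewrite inE /= in_itv /= => /andP [lo_t _].
  apply: resolvent_sum_continuous => i.
  by have := a_gt0 j; have := shift_pos t i lo_t; lra.
have S_between : Num.min (resolvent_sum lo) (resolvent_sum hi) <= 1
                 <= Num.max (resolvent_sum lo) (resolvent_sum hi).
  by rewrite ge_min le_max S_hi S_lo orbT.
have [lam] := IVT lo_hi S_cont S_between.
rewrite in_itv /= => /andP [lo_lam _] S_lam; exists lam => // i.
by have := a_gt0 j; have := shift_pos lam i lo_lam; lra.
Qed.

Lemma increment_as_tangent_sum (lam mu : R) :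
  (forall i, 0 < lam + c i) -> resolvent_sum lam = 1 ->
  mu - lam = \sum_(i < d) a i * ((mu + c i) / (lam + c i) - 1).
Proof.
move=> lam_dom S_lam.
have term i : a i * ((mu + c i) / (lam + c i) - 1) = (mu - lam) * (a i / (lam + c i)).
  by field; rewrite gt_eqF.
by rewrite (eq_bigr _ (fun i _ => term i)) -mulr_sumr -/(resolvent_sum lam) S_lam mulr1.
Qed.

Lemma resolvent_root_minimizes (lam mu : R) :
  (forall i, 0 < lam + c i) -> (forall i, 0 < mu + c i) -> resolvent_sum lam = 1 ->
  weighted_log_dual lam <= weighted_log_dual mu.
Proof.
move=> lam_dom mu_dom S_lam.
have : \sum_(i < d) a i * ln (mu + c i) - \sum_(i < d) a i * ln (lam + c i) <= mu - lam.
  rewrite (increment_as_tangent_sum mu lam_dom S_lam) -sumrB.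
  by apply: ler_sum => i _; rewrite -mulrBr ler_pM2l // ln_sub_le.
rewrite /weighted_log_dual; lra.
Qed.

Lemma resolvent_root_strict_min (lam mu : R) : (1 <= d)%N ->
  (forall i, 0 < lam + c i) -> (forall i, 0 < mu + c i) -> resolvent_sum lam = 1 ->
  mu != lam -> weighted_log_dual lam < weighted_log_dual mu.
Proof.
move=> hd lam_dom mu_dom S_lam mu_neq.
have : \sum_(i < d) a i * ln (mu + c i) - \sum_(i < d) a i * ln (lam + c i) < mu - lam.
  rewrite (increment_as_tangent_sum mu lam_dom S_lam) -sumrB.
  apply: ltr_sum; first by apply/hasP; exists (Ordinal hd); rewrite ?mem_index_enum.
  move=> i _; rewrite -mulrBr ltr_pM2l // ln_sub_lt //.
  by apply: contra mu_neq => /eqP/addIr ->.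
rewrite /weighted_log_dual; lra.
Qed.

End ResolventEquation.

Section LogBarrierOptimality.
Variables (R : realType) (d : nat) (eta : R) (c : 'I_d -> R).
Hypothesis eta_gt0 : 0 < eta.

Lemma regobj_interior (y : 'I_d -> R) : (forall i, 0 < y i) ->
  regobj eta c y = (dotv c y + eta^-1 * (- (d%:R * ln (d%:R : R)) - \sum_(i < d) ln (y i)))%:E.
Proof. by move=> y_pos; rewrite /regobj /logbarrier asboolT. Qed.

Lemma barrier_stationary_min (x y : 'I_d -> R) (lam : R) :
  (forall i, 0 < x i) -> \sum_(i < d) x i = 1 ->
  (forall i, x i * (eta * c i + lam) = 1) ->
  (forall i, 0 < y i) -> \sum_(i < d) y i = 1 ->
  eta * dotv c x - \sum_(i < d) ln (x i) <= eta * dotv c y - \sum_(i < d) ln (y i).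
Proof.
move=> x_pos x_sum x_stat y_pos y_sum.
have coord i : (eta * c i + lam) * x i - ln (x i) <= (eta * c i + lam) * y i - ln (y i).
  have t_eq : eta * c i + lam = (x i)^-1.
    by apply: (mulfI (lt0r_neq0 (x_pos i))); rewrite x_stat divff ?gt_eqF.
  have := ln_sub_le (y_pos i) (x_pos i).
  by rewrite t_eq mulVf ?gt_eqF // mulrC; lra.
have expand (z : 'I_d -> R) : \sum_(i < d) ((eta * c i + lam) * z i - ln (z i))
    = eta * dotv c z + lam * \sum_(i < d) z i - \sum_(i < d) ln (z i).
  rewrite sumrB /dotv !mulr_sumr -big_split /=; congr (_ - _).
  by apply: eq_bigr => i _; ring.
suff : \sum_(i < d) ((eta * c i + lam) * x i - ln (x i))
       <= \sum_(i < d) ((eta * c i + lam) * y i - ln (y i)).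
  by rewrite !expand x_sum y_sum; lra.
by apply: ler_sum => i _; exact: coord.
Qed.

(* Hence such an x minimizes <c, y> + eta^-1 h(y) over the whole simplex
   (points on the boundary have objective +oo). *)
Lemma barrier_stationary_argmin (x : 'I_d -> R) (lam : R) :
  (forall i, 0 < x i) -> \sum_(i < d) x i = 1 ->
  (forall i, x i * (eta * c i + lam) = 1) ->
  forall y, simplex y -> (regobj eta c x <= regobj eta c y)%E.
Proof.
move=> x_pos x_sum x_stat y [_ y_sum]; rewrite regobj_interior //.
have [y_pos|y_bd] := asboolP (forall i, 0 < y i); last first.
  rewrite /regobj /logbarrier asboolF //.
  by rewrite mulry gtr0_sg ?invr_gt0 // mul1e addey // leey.
rewrite regobj_interior // lee_fin.
have := barrier_stationary_min x_pos x_sum x_stat y_pos y_sum.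
have scale (D K S : R) : D + eta^-1 * (K - S) = eta^-1 * (eta * D - S + K).
  by field; rewrite gt_eqF.
by rewrite !scale ler_pM2l ?invr_gt0 // lerD2r.
Qed.

End LogBarrierOptimality.

Theorem mainTheorem1 (R : realType) (d : nat) (eta : R) (g p : 'I_d -> R)
  (hd : (1 <= d)%N) (heta : 0 < eta)
  (hp : forall i, -1 <= eta * p i <= 0) :
  exists lam : R,
    is_psi_minimizer eta g p lam /\
    (forall lam', is_psi_minimizer eta g p lam' -> lam' = lam) /\
    let x : 'I_d -> R := fun i => (1 - eta * p i) / (lam + eta * g i) in
    let ghat : 'I_d -> R := fun i => p i * ((lam + eta * g i) / (1 - eta * p i)) in
    simplex x /\
    (forall i, x i * ghat i = p i) /\
    (forall y, simplex y ->
       (regobj eta (fun i => (g i + ghat i)%R) x <= regobj eta (fun i => (g i + ghat i)%R) y)%E).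
Proof.
pose a i := 1 - eta * p i; pose c i := eta * g i.
have a_gt0 i : 0 < a i by have := hp i; rewrite /a; lra.
have [lam lam_dom S_lam] := resolvent_sum_root c a_gt0 hd.
have lam_min : is_psi_minimizer eta g p lam.
  by split=> // mu mu_dom; exact: resolvent_root_minimizes.
exists lam; split=> //; split.
  move=> lam' [lam'_dom lam'_min]; apply/eqP; apply: contraT => lam'_neq.
  have := resolvent_root_strict_min a_gt0 hd lam_dom lam'_dom S_lam lam'_neq.
  by rewrite /weighted_log_dual ltNge lam'_min.
move=> x ghat; have x_pos i : 0 < x i := divr_gt0 (a_gt0 i) (lam_dom i).
have a_neq0 i : 1 - eta * p i != 0 := lt0r_neq0 (a_gt0 i).
have b_neq0 i : lam + eta * g i != 0 := lt0r_neq0 (lam_dom i).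
split; first by split=> [i|]; [exact: ltW | exact: S_lam].
split; first by move=> i; rewrite /x /ghat; field; rewrite a_neq0 b_neq0.
apply: (barrier_stationary_argmin heta x_pos S_lam (lam := lam)) => i.
by rewrite /x /ghat; field; rewrite a_neq0 b_neq0.
Qed.
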